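(* Let $\Lambda\subset\mathbb B_d$ be an interpolating sequence. Then $\{w\}\cup\Lambda$ is also an interpolating sequence for every $w\in\mathbb B_d$.
   Context: $\mathbb B_d$ is the open unit ball of $\mathbb C^d$; $\mathcal M_d$ is the multiplier algebra of the Drury–Arveson space $H^2_d$ (the reproducing kernel Hilbert space on $\mathbb B_d$ with kernel $(1-\langle z,w\rangle)^{-1}$). A countable set $\Lambda\subset\mathbb B_d$ is an interpolating sequence if for every bounded function $a$ on $\Lambda$ there is $\psi\in\mathcal M_d$ with $\psi(\lambda)=a(\lambda)$ for all $\lambda\in\Lambda$. *)

From HB Require Import structures.
From mathcomp Require Import all_boot all_order all_algebra.
From mathcomp Require Import complex.
From mathcomp Require Import boolp classical_sets cardinality reals.
Set Implicit Arguments. Unset Strict Implicit. Unset Printing Implicit Defensive.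
Import Order.TTheory GRing.Theory Num.Theory.
Local Open Scope ring_scope.
Local Open Scope classical_set_scope.

Section DruryArveson.
Variable R : realType.
Notation C := (complex R).

Definition cvec (d : nat) := 'I_d -> C.

Definition cinner (d : nat) (z w : cvec d) : C := \sum_(i < d) z i * (w i)^*.

Definition ball_d (d : nat) : set (cvec d) := [set z | cinner z z < 1].

Definition DAkernel (d : nat) (z w : cvec d) : C := (1 - cinner z w)^-1.

(* Membership in the RKHS H(k) with kernel k = DAkernel (Aronszajn):
   f belongs to H^2_d iff the functional  sum_j a_j k_{x_j} |-> sum_j conj(a_j) f(x_j)
   = < f , sum_j a_j k_{x_j} >  is bounded on the span of the kernel functions, i.e.
   there is M with |sum_j conj(a_j) f(x_j)|^2 <= M * ||sum_j a_j k_{x_j}||^2,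
   where ||sum_j a_j k_{x_j}||^2 = sum_{i,j} conj(a_i) a_j k(x_i, x_j). *)
Definition in_DA (d : nat) (f : cvec d -> C) : Prop :=
  exists M : C, forall (n : nat) (x : 'I_n -> cvec d) (a : 'I_n -> C),
    (forall j, ball_d (x j)) ->
    `|\sum_(j < n) (a j)^* * f (x j)| ^+ 2
      <= M * \sum_(i < n) \sum_(j < n) (a i)^* * a j * DAkernel (x i) (x j).

Definition is_multiplier (d : nat) (phi : cvec d -> C) : Prop :=
  forall f : cvec d -> C, in_DA f -> in_DA (fun z => phi z * f z).

Definition interpolating (d : nat) (L : set (cvec d)) : Prop :=
  [/\ countable L, L `<=` @ball_d d &
    forall a : cvec d -> C, (exists B : R, forall l, L l -> `|a l| <= (B%:C)%C) ->
      exists phi : cvec d -> C, is_multiplier phi /\ forall l, L l -> phi l = a l].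

End DruryArveson.
Arguments ball_d {R} d.

From HB Require Import structures.
From mathcomp Require Import all_boot all_order all_algebra.
From mathcomp Require Import complex.
From mathcomp Require Import boolp classical_sets cardinality reals.
From mathcomp Require Import ring lra.
Set Implicit Arguments. Unset Strict Implicit. Unset Printing Implicit Defensive.
Import Order.TTheory GRing.Theory Num.Theory.
Local Open Scope ring_scope.
Local Open Scope classical_set_scope.

(* If w is not in Λ, add to an interpolant on Λ a multiple of a multiplier ψ with
   ψ = 0 on Λ and ψ(w) = 1, namely ψ = 1 - θ Σ_i (z_i - w_i) ζ_i, where θ and ζ_i
   interpolate |λ - w|^-2 and conj(λ_i - w_i) on Λ.  The data for θ is bounded because
   Λ stays away from w: otherwise a multiplier taking the values 1 and 0 alternately
   along a sequence of Λ tending to w would be discontinuous at w, whereas every f in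
   H^2_d satisfies |f(z) - f(w)|^2 <= M ||k_z - k_w||^2.
   Positivity of the kernel form Q(a) = Σ_{i,j} conj(a_i) a_j k(x_i, x_j) comes from
   k(z, w) = 1 + <z, w> k(z, w), which gives Q(a) = |Σ_j a_j|^2 + Σ_l Q(a conj(x_l)):
   a negative best constant μ in μ |a|^2 <= Q(a) could then be improved to μ ρ with
   ρ = max_j |x_j|^2 < 1. *)

Lemma sqr_normrD_le (R : numDomainType) (u v : R) :
  `|u + v| ^+ 2 <= 2 * `|u| ^+ 2 + 2 * `|v| ^+ 2.
Proof.
apply: le_trans (_ : (`|u| + `|v|) ^+ 2 <= _).
  by rewrite ler_pXn2r ?nnegrE ?addr_ge0 ?ler_normD.
have := (real_leif_mean_square_scaled (normr_real u) (normr_real v)).1.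
rewrite sqrrD -subr_ge0 => AMGM; rewrite -subr_ge0.
set a := `|u|; set b := `|v|.
have -> : 2 * a ^+ 2 + 2 * b ^+ 2 - (a ^+ 2 + a * b *+ 2 + b ^+ 2) =
  a ^+ 2 + b ^+ 2 - a * b *+ 2 by rewrite !mulr2n; ring.
exact: AMGM.
Qed.

Lemma normr_div_mul_le (F : numFieldType) (x p q e h : F) :
  0 < h -> h <= `|p| -> h <= `|q| -> `|x| <= e -> `|x / (p * q)| <= e / (h * h).
Proof.
move=> h_gt0 hp hq xe.
have p_gt0 : 0 < `|p| by apply: lt_le_trans hp.
have q_gt0 : 0 < `|q| by apply: lt_le_trans hq.
rewrite normrM normfV normrM; apply: ler_pM => //.
  by rewrite invr_ge0 mulr_ge0.
by rewrite lef_pV2 ?posrE ?mulr_gt0 // ler_pM // ltW.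
Qed.

Lemma half_le_normrB (F : numFieldType) (c u e : F) :
  0 < c -> 4 * e <= c -> `|u| <= 2 * e -> c / 2 <= `|c - u|.
Proof.
move=> c_gt0 ce ue; apply: le_trans (lerB_normD c (- u)); rewrite normrN (gtr0_norm c_gt0).
apply: le_trans (_ : c - 2 * e <= c - `|u|); last by rewrite lerD2l lerN2.
rewrite -subr_ge0 (_ : c - 2 * e - c / 2 = (c - 4 * e) / 2); last by field.
by rewrite divr_ge0 // subr_ge0.
Qed.

Lemma self_improving_lbound_ge0 (R : realType) (B : Type) (Q N : B -> R) (K rho : R) :
  (forall b, 0 <= N b) -> (forall b, - K * N b <= Q b) -> rho < 1 ->
  (forall m, m < 0 -> (forall b, m * N b <= Q b) -> forall b, m * rho * N b <= Q b) ->
  forall b, 0 <= Q b.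
Proof.
move=> N_ge0 QK rho_lt1 improve b.
have [Nb0|Nb_neq0] := eqVneq (N b) 0; first by have := QK b; rewrite Nb0 mulr0.
have Nb_gt0 : 0 < N b by rewrite lt_def Nb_neq0 N_ge0.
pose S := [set m | forall b', m * N b' <= Q b'].
have S_neq0 : S !=set0 by exists (- K).
have S_ub : ubound S (Q b / N b) by move=> m Sm; rewrite ler_pdivlMr.
have S_sup : S (sup S).
  move=> b'; have [Nb'0|Nb'_neq0] := eqVneq (N b') 0.
    by have := QK b'; rewrite Nb'0 !mulr0.
  have Nb'_gt0 : 0 < N b' by rewrite lt_def Nb'_neq0 N_ge0.
  rewrite -ler_pdivlMr //; apply: ge_sup => // m Sm.
  by rewrite ler_pdivlMr.
have sup_ge0 : 0 <= sup S.
  rewrite leNgt; apply/negP => sup_lt0.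
  have : sup S * rho <= sup S by apply: ub_le_sup; [exists (Q b / N b) | exact: improve].
  nra.
by apply: le_trans (S_sup b); rewrite mulr_ge0.
Qed.

Lemma decreasing_seq_to0 (R : realType) (T : Type) (P : set T) (g : T -> R) :
  (forall t, P t -> 0 < g t) -> (forall eta, 0 < eta -> exists2 t, P t & g t < eta) ->
  exists s : nat -> T, [/\ forall n, P (s n),
    forall m n, (m < n)%N -> g (s n) < g (s m) &
    forall eta, 0 < eta -> exists N, forall n, (N <= n)%N -> g (s n) < eta].
Proof.
move=> g_gt0 small; have [t0 _ _] := small 1 ltr01.
have /choice[pick pickP] : forall eta, exists t, 0 < eta -> P t /\ g t < eta.
  move=> eta; have [eta_gt0|_] := boolP (0 < eta); last by exists t0.
  by have [t Pt gt] := small eta eta_gt0; exists t.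
pose fix s n := if n is m.+1 then pick (Num.min (g (s m)) m.+2%:R^-1) else pick 1.
have min_gt0 m : P (s m) -> 0 < Num.min (g (s m)) m.+2%:R^-1.
  by move=> Psm; rewrite lt_min g_gt0 //= invr_gt0 ltr0n.
have sP n : P (s n) /\ g (s n) < n.+1%:R^-1.
  elim: n => [|m [Psm _]]; first by rewrite invr1; exact: pickP ltr01.
  have [Psm1] := pickP _ (min_gt0 m Psm).
  by rewrite lt_min => /andP[_ lt_inv].
have s_dec m : g (s m.+1) < g (s m).
  by have [_] := pickP _ (min_gt0 m (sP m).1); rewrite lt_min => /andP[].
exists s; split.
- by move=> n; case: (sP n).
- move=> m; elim=> // n IHn; rewrite ltnS leq_eqVlt => /orP[/eqP <-|mn].
    exact: s_dec.
  exact: lt_trans (s_dec n) (IHn mn).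
- move=> eta eta_gt0; exists (Num.bound eta^-1) => n Nn.
  apply: lt_le_trans (sP n).2 _.
  have inv_ge0 : 0 <= eta^-1 by rewrite invr_ge0 ltW.
  rewrite invf_ple ?posrE ?ltr0n //; apply/ltW/(lt_le_trans (archi_boundP inv_ge0)).
  by rewrite ler_nat (leq_trans Nn).
Qed.

Lemma realc (R : rcfType) (r : R) : (r%:C)%C \is Num.real.
Proof. by apply/complex_realP; exists r. Qed.

Lemma Re_scalec (R : rcfType) (r : R) (u : R[i]) :
  complex.Re ((r%:C)%C * u) = r * complex.Re u.
Proof. by case: u => a b; rewrite /= mul0r subr0. Qed.

Lemma real_Re_le (R : rcfType) (u v : R[i]) : u \is Num.real -> v \is Num.real ->
  (complex.Re u <= complex.Re v) = (u <= v).
Proof. by move=> uR vR; rewrite -lecR !RRe_real. Qed.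

Section InnerProduct.
Variables (R : realType) (d : nat).
Local Notation C := (complex R).
Implicit Types (x y z w u v : cvec R d) (e : C).

Lemma conj_cinner z w : (cinner z w)^* = cinner w z.
Proof.
rewrite /cinner rmorph_sum; apply: eq_bigr => i _.
by rewrite rmorphM /= conjCK mulrC.
Qed.

Lemma cinner_ge0 z : 0 <= cinner z z.
Proof. by apply: sumr_ge0 => i _; exact: mul_conjC_ge0. Qed.

Lemma cinner_real z : cinner z z \is Num.real.
Proof. exact/ger0_real/cinner_ge0. Qed.

Lemma sqr_normr_le_cinner z i : `|z i| ^+ 2 <= cinner z z.
Proof.
rewrite normCK /cinner (bigD1 i) //= lerDl.
by apply: sumr_ge0 => j _; exact: mul_conjC_ge0.
Qed.

Lemma cinner_eq0 z : cinner z z = 0 -> forall i, z i = 0.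
Proof.
move=> /eqP; rewrite psumr_eq0 => [/allP z0 i|i _]; last exact: mul_conjC_ge0.
by have /= := z0 i (mem_index_enum i); rewrite mul_conjC_eq0 => /eqP.
Qed.

Lemma normr_cinner_le z w e : 0 <= e ->
  2 * e * `|cinner z w| <= e ^+ 2 * cinner z z + cinner w w.
Proof.
move=> e_ge0.
have le_sum : `|cinner z w| <= \sum_i `|z i| * `|w i|.
  apply: le_trans (ler_norm_sum _ _ _) _.
  by apply: ler_sum => i _; rewrite normrM norm_conjC.
apply: le_trans (_ : 2 * e * \sum_i `|z i| * `|w i| <= _).
  by rewrite ler_wpM2l // mulr_ge0.
rewrite /cinner !mulr_sumr -big_split /=; apply: ler_sum => i _.
have := (real_leif_mean_square_scaled (ger0_real (mulr_ge0 e_ge0 (normr_ge0 (z i))))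
          (ger0_real (normr_ge0 (w i)))).1.
by rewrite -!normCK exprMn mulr_natl !mulrA !mulrnAl.
Qed.

Definition csub x y : cvec R d := fun i => x i - y i.

Lemma cinnerBr z x y : cinner z (csub x y) = cinner z x - cinner z y.
Proof.
rewrite /cinner -sumrB; apply: eq_bigr => i _.
by rewrite /csub rmorphB /= mulrBr.
Qed.

Lemma cinnerBl x y z : cinner (csub x y) z = cinner x z - cinner y z.
Proof. by rewrite /cinner -sumrB; apply: eq_bigr => i _; rewrite /csub mulrBl. Qed.

Lemma normr_cinner_small v u e : 0 < e -> cinner v v <= 1 -> cinner u u <= e ^+ 2 ->
  `|cinner v u| <= e.
Proof.
move=> e_gt0 v1 ue.
rewrite -(ler_pM2l (mulr_gt0 (ltr0n _ 2) e_gt0)).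
apply: le_trans (normr_cinner_le v u (ltW e_gt0)) _.
rewrite (_ : 2 * e * e = e ^+ 2 + e ^+ 2); last by ring.
by apply: lerD => //; apply: ler_piMr v1; rewrite exprn_ge0 // ltW.
Qed.

Section Ball.
Variables z w : cvec R d.
Hypotheses (zB : ball_d d z) (wB : ball_d d w).

Lemma normr_cinner_lt1 : `|cinner z w| < 1.
Proof.
have := normr_cinner_le z w ler01; rewrite expr1n mul1r mulr1 => le2.
rewrite -(ltr_pM2l (ltr0n _ 2)) mulr1; apply: le_lt_trans le2 _.
by rewrite -[2%:R]/(1 + 1 : C) ltrD.
Qed.

Lemma one_sub_cinner_neq0 : 1 - cinner z w != 0.
Proof.
rewrite subr_eq0; apply/eqP => inner1.
by have := normr_cinner_lt1; rewrite -inner1 normr1 ltxx.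
Qed.

Lemma DAkernelE : DAkernel z w = 1 + cinner z w * DAkernel z w.
Proof.
have := one_sub_cinner_neq0; rewrite /DAkernel.
by move: (cinner z w) => c c_neq1; field.
Qed.

End Ball.

Lemma normr_coord_le1 z i : ball_d d z -> `|z i| <= 1.
Proof.
by move=> zB; rewrite -(@expr_le1 _ 2) //; apply: le_trans (ltW zB); exact: sqr_normr_le_cinner.
Qed.

End InnerProduct.

Section KernelForm.
Variables (R : realType) (d n : nat) (x : 'I_n -> cvec R d).
Local Notation C := (complex R).
Implicit Types a b : cvec R n.

Definition kform a : C := \sum_i \sum_j (a i)^* * a j * DAkernel (x i) (x j).

(* Multiplying by the coordinate z_l turns the pairing with sum_j a_j k_(x_j) into the
   pairing with sum_j (coefX a l)_j k_(x_j). *)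
Definition coefX a (l : 'I_d) : cvec R n := fun j => a j * (x j l)^*.

Lemma conj_kform a : (kform a)^* = kform a.
Proof.
rewrite /kform rmorph_sum exchange_big; apply: eq_bigr => j _.
rewrite rmorph_sum; apply: eq_bigr => i _.
rewrite /DAkernel !rmorphM /= fmorphV /= rmorphB /= rmorph1 conj_cinner conjCK.
ring.
Qed.

Lemma kform_real a : kform a \is Num.real.
Proof. by rewrite CrealE conj_kform. Qed.

Lemma normr_kform_le a :
  `|kform a| <= cinner a a * \sum_i \sum_j `|DAkernel (x i) (x j)|.
Proof.
apply: le_trans (ler_norm_sum _ _ _) _; rewrite mulr_sumr.
apply: ler_sum => i _; apply: le_trans (ler_norm_sum _ _ _) _.
rewrite mulr_sumr; apply: ler_sum => j _.
rewrite !normrM norm_conjC ler_wpM2r //.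
have le2 := (real_leif_mean_square_scaled (normr_real (a i)) (normr_real (a j))).1.
rewrite -(ler_pMn2r (ltn0Sn 1)); apply: le_trans le2 _.
by rewrite mulr2n lerD ?sqr_normr_le_cinner.
Qed.

Lemma sum_cinner_coefX a :
  \sum_l cinner (coefX a l) (coefX a l) = \sum_j a j * (a j)^* * cinner (x j) (x j).
Proof.
rewrite exchange_big; apply: eq_bigr => j _.
rewrite /cinner mulr_sumr; apply: eq_bigr => l _.
rewrite /coefX rmorphM /= conjCK; ring.
Qed.

Hypothesis x_ball : forall j, ball_d d (x j).

Lemma kformE a : kform a = `|\sum_j a j| ^+ 2 + \sum_l kform (coefX a l).
Proof.
rewrite /kform.
transitivity (\sum_i \sum_j (a i)^* * a j + \sum_i \sum_j
   (a i)^* * a j * (cinner (x i) (x j) * DAkernel (x i) (x j))).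
  rewrite -big_split; apply: eq_bigr => i _; rewrite -big_split.
  apply: eq_bigr => j _; rewrite {1}(DAkernelE (x_ball i) (x_ball j)) /=; ring.
congr (_ + _).
  rewrite normCKC rmorph_sum mulr_suml; apply: eq_bigr => i _.
  by rewrite mulr_sumr.
transitivity (\sum_i \sum_j \sum_l (coefX a l i)^* * (coefX a l j) *
   DAkernel (x i) (x j)).
  apply: eq_bigr => i _; apply: eq_bigr => j _.
  rewrite /cinner mulr_suml mulr_sumr; apply: eq_bigr => l _.
  rewrite /coefX rmorphM /= conjCK; ring.
under eq_bigr => i _ do rewrite exchange_big.
by rewrite exchange_big.
Qed.

Lemma kform_lbound_improve (m rho : C) : m <= 0 ->
  (forall j, cinner (x j) (x j) <= rho) ->
  (forall b, m * cinner b b <= kform b) -> forall b, m * rho * cinner b b <= kform b.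
Proof.
move=> m_le0 x_rho m_lbound b; rewrite kformE.
apply: le_trans (_ : \sum_l kform (coefX b l) <= _); last by rewrite lerDr exprn_ge0.
apply: le_trans (_ : \sum_l m * cinner (coefX b l) (coefX b l) <= _); last first.
  by apply: ler_sum => l _; exact: m_lbound.
rewrite -mulr_sumr sum_cinner_coefX -mulrA; apply: ler_wnM2l => //.
rewrite [cinner b b]/cinner mulr_sumr; apply: ler_sum => j _.
by rewrite [leRHS]mulrC ler_wpM2l ?mul_conjC_ge0.
Qed.

Lemma kform_ge0 a : 0 <= kform a.
Proof.
pose rho := \big[Order.max/0]_j complex.Re (cinner (x j) (x j)).
have rho_lt1 : rho < 1.
  apply/bigmax_ltP; split => // j _.
  by rewrite -(@ltcR R) RRe_real ?cinner_real //; exact: x_ball.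
have x_rho j : cinner (x j) (x j) <= (rho%:C)%C.
  by rewrite -[leLHS]RRe_real ?cinner_real // lecR; exact: le_bigmax.
pose K := \sum_i \sum_j `|DAkernel (x i) (x j)|.
have K_real : K \is Num.real.
  by apply/ger0_real/sumr_ge0 => i _; apply/sumr_ge0 => j _; exact: normr_ge0.
rewrite -real_Re_le ?real0 ?kform_real //.
apply: (@self_improving_lbound_ge0 R _ (fun b => complex.Re (kform b))
  (fun b => complex.Re (cinner b b)) (complex.Re K) rho) => // [b|b|r r_lt0 r_lbound b].
- by rewrite (@real_Re_le _ 0) ?real0 ?cinner_real ?cinner_ge0.
- rewrite -Re_scalec real_Re_le ?rpredM ?kform_real ?cinner_real ?realc //.
  rewrite rmorphN /= RRe_real // mulNr lerNl.
  apply: le_trans (real_ler_norm _) _; first by rewrite rpredN kform_real.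
  by rewrite normrN mulrC; exact: normr_kform_le.
- rewrite -Re_scalec real_Re_le ?rpredM ?kform_real ?cinner_real ?realc //.
  rewrite rmorphM /=; apply: kform_lbound_improve => // [|b'].
    by rewrite lecR ltW.
  by rewrite -real_Re_le ?rpredM ?kform_real ?cinner_real ?realc // Re_scalec.
Qed.

Lemma normr_sum_le_kform a : `|\sum_j a j| ^+ 2 <= kform a.
Proof. by rewrite kformE lerDl sumr_ge0 // => l _; exact: kform_ge0. Qed.

Lemma kform_coefX_le a l : kform (coefX a l) <= kform a.
Proof.
rewrite [leRHS]kformE (bigD1 l) //= addrCA lerDl addr_ge0 ?exprn_ge0 //.
by apply: sumr_ge0 => l' _; exact: kform_ge0.
Qed.

End KernelForm.

Section DruryArvesonSpace.
Variables (R : realType) (d : nat).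
Local Notation C := (complex R).
Local Notation V := (cvec R d).
Implicit Types (f g p q : V -> C) (z w : V).

Definition DA_bound f (M : C) := forall n (x : 'I_n -> V) (a : cvec R n),
  (forall j, ball_d d (x j)) -> `|\sum_j (a j)^* * f (x j)| ^+ 2 <= M * kform x a.

Lemma in_DAP f : in_DA f <-> exists2 M, 0 <= M & DA_bound f M.
Proof.
split => [[M fM]|[M _ fM]]; last by exists M.
exists `|M|; first exact: normr_ge0.
move=> n x a xB; have le_M := fM n x a xB.
have ge0_M : 0 <= M * kform x a by apply: le_trans le_M; rewrite exprn_ge0.
by rewrite -(ger0_norm (kform_ge0 xB a)) -normrM ger0_norm.
Qed.

Lemma in_DA1 : in_DA (fun _ : V => 1).
Proof.
exists 1 => n x a xB; rewrite mul1r.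
under eq_bigr do rewrite mulr1.
by rewrite -rmorph_sum /= norm_conjC; exact: normr_sum_le_kform.
Qed.

Lemma in_DAD f g : in_DA f -> in_DA g -> in_DA (fun z => f z + g z).
Proof.
move=> /in_DAP [M1 M1_ge0 fM1] /in_DAP [M2 M2_ge0 gM2].
exists (2 * M1 + 2 * M2) => n x a xB.
under eq_bigr do rewrite mulrDr.
rewrite big_split /=; apply: le_trans (sqr_normrD_le _ _) _.
rewrite [leRHS]mulrDl -!mulrA; apply: lerD; rewrite ler_wpM2l //; [exact: fM1 | exact: gM2].
Qed.

Lemma in_DAZ c f : in_DA f -> in_DA (fun z => c * f z).
Proof.
move=> /in_DAP [M M_ge0 fM]; exists (`|c| ^+ 2 * M) => n x a xB.
under eq_bigr do rewrite mulrCA.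
by rewrite -mulr_sumr normrM exprMn -[leRHS]mulrA ler_wpM2l ?exprn_ge0 ?fM.
Qed.

Lemma multiplier_cst c : is_multiplier (fun _ : V => c).
Proof. by move=> f; exact: in_DAZ. Qed.

Lemma multiplierD p q : is_multiplier p -> is_multiplier q ->
  is_multiplier (fun z => p z + q z).
Proof.
move=> pM qM f f_DA; under eq_fun do rewrite mulrDl.
exact: in_DAD (pM f f_DA) (qM f f_DA).
Qed.

Lemma multiplierM p q : is_multiplier p -> is_multiplier q ->
  is_multiplier (fun z => p z * q z).
Proof. by move=> pM qM f f_DA; under eq_fun do rewrite -mulrA; exact/pM/qM. Qed.

Lemma multiplierN p : is_multiplier p -> is_multiplier (fun z => - p z).
Proof.
by move=> pM; under eq_fun do rewrite -mulN1r; exact: multiplierM (multiplier_cst _) pM.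
Qed.

Lemma multiplier_sum (I : Type) (r : seq I) (F : I -> V -> C) :
  (forall i, is_multiplier (F i)) -> is_multiplier (fun z => \sum_(i <- r) F i z).
Proof.
move=> FM; elim: r => [|i r IHr].
  by under eq_fun do rewrite big_nil; exact: multiplier_cst.
by under eq_fun do rewrite big_cons; exact: multiplierD.
Qed.

Lemma multiplier_coord l : is_multiplier (fun z : V => z l).
Proof.
move=> f /in_DAP [M M_ge0 fM]; exists M => n x a xB.
have -> : \sum_j (a j)^* * (x j l * f (x j)) = \sum_j (coefX x a l j)^* * f (x j).
  by apply: eq_bigr => j _; rewrite /coefX rmorphM /= conjCK mulrA.
by apply: le_trans (fM n x _ xB) _; rewrite ler_wpM2l // kform_coefX_le.
Qed.

End DruryArvesonSpace.

Section Continuity.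
Variables (R : realType) (d : nat).
Local Notation C := (complex R).
Local Notation V := (cvec R d).
Implicit Types (f : V -> C) (z w : V) (e : C).

(* the squared norm of k_z - k_w in H^2_d *)
Definition kdist2 z w := DAkernel z z - DAkernel z w - DAkernel w z + DAkernel w w.

Lemma kdist2E z w : ball_d d z -> ball_d d w ->
  kdist2 z w = cinner z (csub z w) / ((1 - cinner z z) * (1 - cinner z w))
             - cinner w (csub z w) / ((1 - cinner w w) * (1 - cinner w z)).
Proof.
move=> zB wB; rewrite /kdist2 /DAkernel !cinnerBr.
have := one_sub_cinner_neq0 zB zB; have := one_sub_cinner_neq0 zB wB.
have := one_sub_cinner_neq0 wB zB; have := one_sub_cinner_neq0 wB wB.
move: (cinner z z) (cinner z w) (cinner w z) (cinner w w) => zz zw wz ww.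
by move=> ww1 wz1 zw1 zz1; field; rewrite zz1 zw1 wz1 ww1.
Qed.

Lemma normr_kdist2_le z w e : ball_d d z -> ball_d d w -> 0 < e ->
  4 * e <= 1 - cinner w w -> cinner (csub z w) (csub z w) <= e ^+ 2 ->
  `|kdist2 z w| <= 8 * e / (1 - cinner w w) ^+ 2.
Proof.
move=> zB wB e_gt0 ec ue; set u := csub z w in ue; set c := 1 - cinner w w in ec *.
have c_gt0 : 0 < c by rewrite subr_gt0.
have zu : `|cinner z u| <= e by apply: normr_cinner_small => //; exact: ltW.
have wu : `|cinner w u| <= e by apply: normr_cinner_small => //; exact: ltW.
have uw : `|cinner u w| <= e by rewrite -conj_cinner norm_conjC.
have e_le2e : e <= 2 * e by rewrite mulr2n mulrDl mul1r lerDl ltW.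
have den_zz : c / 2 <= `|1 - cinner z z|.
  have -> : 1 - cinner z z = c - (cinner z u + cinner u w).
    by rewrite /c /u cinnerBr cinnerBl; ring.
  apply: (half_le_normrB c_gt0 ec); apply: le_trans (ler_normD _ _) _.
  by rewrite mulr2n mulrDl mul1r; exact: lerD.
have den_zw : c / 2 <= `|1 - cinner z w|.
  have -> : 1 - cinner z w = c - cinner u w by rewrite /c /u cinnerBl; ring.
  exact: (half_le_normrB c_gt0 ec (le_trans _ e_le2e)).
have den_wz : c / 2 <= `|1 - cinner w z|.
  have -> : 1 - cinner w z = c - cinner w u by rewrite /c /u cinnerBr; ring.
  exact: (half_le_normrB c_gt0 ec (le_trans _ e_le2e)).
have den_ww : c / 2 <= `|c| by rewrite gtr0_norm // ler_pdivrMr // ler_peMr // ltW // ltr1n.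
have c2_gt0 : 0 < c / 2 by rewrite divr_gt0.
rewrite kdist2E //; apply: le_trans (ler_normB _ _) _.
apply: le_trans (lerD (normr_div_mul_le c2_gt0 den_zz den_zw zu)
  (normr_div_mul_le c2_gt0 den_ww den_wz wu)) _.
by rewrite le_eqVlt; apply/orP; left; apply/eqP; field; rewrite gt_eqF.
Qed.

Lemma DA_bound_kdist2 f M z w : DA_bound f M -> ball_d d z -> ball_d d w ->
  `|f z - f w| ^+ 2 <= M * kdist2 z w.
Proof.
move=> fM zB wB.
pose x (i : 'I_2) := if i == ord0 then z else w.
pose a (i : 'I_2) : C := if i == ord0 then 1 else -1.
have xB j : ball_d d (x j) by rewrite /x; case: ifP.
have := fM 2 x a xB; rewrite /kform !big_ord_recl !big_ord0 /= /x /a /=.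
rewrite !rmorphN /= !conjC1 !addr0 /kdist2.
rewrite (_ : 1 * f z + - 1 * f w = f z - f w); last by ring.
by move=> /le_trans; apply; rewrite le_eqVlt; apply/orP; left; apply/eqP; ring.
Qed.

Lemma DA_bound_oscillation f M w : 0 <= M -> DA_bound f M -> ball_d d w ->
  exists2 eta : C, 0 < eta & forall z1 z2, ball_d d z1 -> ball_d d z2 ->
    cinner (csub z1 w) (csub z1 w) <= eta -> cinner (csub z2 w) (csub z2 w) <= eta ->
    `|f z1 - f z2| ^+ 2 < 1.
Proof.
move=> M_ge0 fM wB; set c := 1 - cinner w w.
have c_gt0 : 0 < c by rewrite subr_gt0.
have c_le1 : c <= 1 by rewrite lerBlDr lerDl cinner_ge0.
have M4_gt0 : 0 < 32 * M + 4 by rewrite ltr_wpDl ?mulr_ge0.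
pose e := c ^+ 2 / (32 * M + 4).
have e_gt0 : 0 < e by rewrite divr_gt0 ?exprn_gt0.
have ec : 4 * e <= c.
  rewrite /e mulrA ler_pdivrMr // mulrDr [c * 4]mulrC.
  apply: le_trans (_ : 4 * c <= _).
    by rewrite ler_wpM2l // expr2; exact: ler_piMr (ltW c_gt0) c_le1.
  by rewrite lerDr !mulr_ge0 // ltW.
have near z : ball_d d z -> cinner (csub z w) (csub z w) <= e ^+ 2 ->
    `|f z - f w| ^+ 2 <= M * (8 * e / c ^+ 2).
  move=> zB ze; have le_kd := DA_bound_kdist2 fM zB wB.
  have kd_ge0 : 0 <= M * kdist2 z w by apply: le_trans le_kd; rewrite exprn_ge0.
  apply: le_trans le_kd _; rewrite -(ger0_norm kd_ge0) normrM (ger0_norm M_ge0).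
  by rewrite ler_wpM2l // normr_kdist2_le.
exists (e ^+ 2); first exact: exprn_gt0.
move=> z1 z2 z1B z2B z1e z2e.
rewrite (_ : f z1 - f z2 = (f z1 - f w) + - (f z2 - f w)); last by ring.
apply: le_lt_trans (sqr_normrD_le _ _) _; rewrite normrN.
apply: le_lt_trans (_ : 2 * (M * (8 * e / c ^+ 2)) + 2 * (M * (8 * e / c ^+ 2)) < 1).
  by apply: lerD; rewrite ler_wpM2l ?near.
rewrite (_ : _ + _ = 32 * M / (32 * M + 4)); last by rewrite /e; field; rewrite !gt_eqF.
by rewrite ltr_pdivrMr // mul1r ltrDl.
Qed.

End Continuity.

Section Interpolation.
Variables (R : realType) (d : nat) (L : set (cvec R d)).
Local Notation C := (complex R).
Local Notation V := (cvec R d).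
Hypothesis L_interp : interpolating L.

Lemma interpolating_no_injective_cvg (s : nat -> V) w : ball_d d w ->
  (forall n, L (s n)) -> injective s ->
  ~ (forall eta : C, 0 < eta -> exists N, forall n, (N <= n)%N ->
       cinner (csub (s n) w) (csub (s n) w) <= eta).
Proof.
move=> wB Ls s_inj s_cvg; case: L_interp => _ L_ball L_int.
pose a l : C := if `[< exists n, l = s n.*2 >] then 1 else 0.
have [phi [phiM phiE]] : exists phi, is_multiplier phi /\ forall l, L l -> phi l = a l.
  apply: L_int; exists 1 => l _.
  by rewrite /a rmorph1; case: ifP; rewrite ?normr1 ?normr0 ?ler01.
have phi_even n : phi (s n.*2) = 1.
  by rewrite phiE // /a asboolT //; exists n.
have phi_odd n : phi (s n.*2.+1) = 0.
  rewrite phiE // /a asboolF // => -[m /s_inj /(congr1 odd)].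
  by rewrite /= !odd_double.
have /in_DAP[M M_ge0 phiM1] := phiM _ (@in_DA1 R d).
have [eta eta_gt0 osc] := DA_bound_oscillation M_ge0 phiM1 wB.
have [N near] := s_cvg eta eta_gt0.
have N_le : (N <= N.*2)%N by rewrite -addnn leq_addr.
have := osc _ _ (L_ball _ (Ls N.*2)) (L_ball _ (Ls N.*2.+1))
  (near _ N_le) (near _ (leq_trans N_le (leqnSn _))).
by rewrite !mulr1 phi_even phi_odd subr0 normr1 expr1n ltxx.
Qed.

Lemma interpolating_bounded_away w : ball_d d w -> ~ L w ->
  exists2 e : C, 0 < e & forall l, L l -> e <= cinner (csub l w) (csub l w).
Proof.
move=> wB wNL; apply: contrapT => far.
pose g l := complex.Re (cinner (csub l w) (csub l w)).
have gE l : (g l)%:C%C = cinner (csub l w) (csub l w).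
  by rewrite RRe_real ?cinner_real.
have g_gt0 l : L l -> 0 < g l.
  move=> Ll; rewrite lt_def -(@lecR R) gE rmorph0 cinner_ge0 andbT.
  apply/eqP => g0; have /cinner_eq0 lw0 : cinner (csub l w) (csub l w) = 0.
    by rewrite -gE g0 rmorph0.
  suff lw : l = w by apply: wNL; rewrite -lw.
  by apply/funext => i; apply/eqP; rewrite -subr_eq0; apply/eqP/lw0.
have small eta : 0 < eta -> exists2 l, L l & g l < eta.
  move=> eta_gt0; apply: contrapT => no_l; apply: far.
  exists (eta%:C)%C => [|l Ll]; first by rewrite ltcR.
  by rewrite -gE lecR leNgt; apply/negP => lt_eta; apply: no_l; exists l.
have [s [Ls s_dec s_cvg]] := decreasing_seq_to0 g_gt0 small.
apply: (interpolating_no_injective_cvg wB Ls).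
  by move=> m n smn; case: (ltngtP m n) => // mn; have := s_dec _ _ mn; rewrite smn ltxx.
move=> eta eta_gt0; have eta_real : eta \is Num.real by rewrite ger0_real ?ltW.
have [|N near] := s_cvg (complex.Re eta); first by rewrite -(@ltcR R) RRe_real.
by exists N => n Nn; rewrite -gE -(RRe_real eta_real) lecR ltW ?near.
Qed.

Lemma interpolating_peak w : ball_d d w -> ~ L w ->
  exists psi : V -> C, [/\ is_multiplier psi, forall l, L l -> psi l = 0 & psi w = 1].
Proof.
move=> wB wNL; have [e e_gt0 far] := interpolating_bounded_away wB wNL.
case: L_interp => _ L_ball L_int.
have dist_gt0 l : L l -> 0 < cinner (csub l w) (csub l w).
  by move=> Ll; exact: lt_le_trans e_gt0 (far l Ll).
have [theta [thetaM thetaE]] : exists theta : V -> C, is_multiplier theta /\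
    forall l, L l -> theta l = (cinner (csub l w) (csub l w))^-1.
  apply: L_int; exists (complex.Re e)^-1 => l Ll.
  rewrite normfV (gtr0_norm (dist_gt0 l Ll)) fmorphV /= (RRe_real (ger0_real (ltW e_gt0))).
  by rewrite lef_pV2 ?posrE ?dist_gt0 ?far.
have /choice[zeta zetaP] : forall i, exists zeta : V -> C, is_multiplier zeta /\
    forall l, L l -> zeta l = (l i - w i)^*.
  move=> i; apply: L_int; exists 2 => l Ll /=.
  rewrite norm_conjC (rmorph_nat (real_complex R) 2); apply: le_trans (ler_normB _ _) _.
  by rewrite -[2%:R]/(1 + 1 : C); apply: lerD; apply: normr_coord_le1 => //; exact: L_ball.
exists (fun z => 1 - theta z * \sum_i (z i - w i) * zeta i z); split.
- apply/multiplierD/multiplierN/multiplierM/multiplier_sum => [|//|i].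
    exact: multiplier_cst.
  apply/multiplierM; last exact: (zetaP i).1.
  exact/multiplierD/multiplier_cst/multiplier_coord.
- move=> l Ll; rewrite thetaE //.
  have -> : \sum_i (l i - w i) * zeta i l = cinner (csub l w) (csub l w).
    by apply: eq_bigr => i _; rewrite (zetaP i).2.
  by rewrite mulVf ?subrr // gt_eqF ?dist_gt0.
- by rewrite big1 ?mulr0 ?subr0 // => i _; rewrite subrr mul0r.
Qed.

End Interpolation.

Theorem corollary2p4 (R : realType) (d : nat) (L : set (cvec R d)) :
  interpolating L -> forall w : cvec R d, ball_d d w -> interpolating ([set w] `|` L).
Proof.
move=> L_interp w wB; have [L_count L_ball L_int] := L_interp; split.
- rewrite -bigcup2E; apply: bigcup_countable; first exact: countableP.
  by move=> [|[|i]] _ //=.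
- by move=> l [->|/L_ball].
move=> a [B aB]; have [phi [phiM phiE]] : exists phi, is_multiplier phi /\ forall l, L l -> phi l = a l.
  by apply: L_int; exists B => l Ll; apply: aB; right.
have [wL|wNL] := pselect (L w).
  by exists phi; split => // l [->|]; exact: phiE.
have [psi [psiM psi0 psi1]] := interpolating_peak L_interp wB wNL.
exists (fun z => phi z + (a w - phi w) * psi z); split.
  exact/multiplierD/multiplierM/psiM/multiplier_cst.
move=> l [->|Ll]; first by rewrite psi1 mulr1 addrC subrK.
by rewrite psi0 // mulr0 addr0 phiE.
Qed.
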